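(* Let $\mathcal O$ be the $G_0$-orbit of a point $z_0\in\mathfrak g^*\setminus\mathrm{Sing}\,\mathfrak g^*$. Let $U\subset\mathfrak g^*\setminus\mathrm{Sing}\,\mathfrak g^*$ be an open neighbourhood of $z_0$, and let $g_1,\dots,g_r$, with $r=\operatorname{rank}\mathfrak g$, be holomorphic functions on $U$ with $c(g_m)=0$ whose differentials are linearly independent at every point of $U$. Then, at every point of $\mathcal O\cap U$, $T^{1,0}\mathcal O$ is spanned by the vector fields $c(\tilde g_1),\dots,c(\tilde g_r)$, where $\tilde g_m(z)=\sum_i\overline{\frac{\partial g_m}{\partial z_i}(z)}\,z_i$.
   Context: Setting. $\mathfrak g_0$ is a finite-dimensional nonabelian real Lie algebra and $\mathfrak g=\mathfrak g_0^{\mathbb C}$, with $n=\dim_{\mathbb C}\mathfrak g$. Fix a basis of $\mathfrak g_0$ with real structure constants $c_{ij}^k$; $z_k$ are the complex linear coordinates on $\mathfrak g^*$. $G_0$ is the connected real Lie group with Lie algebra $\mathfrak g_0$, acting by the coadjoint action. Bivector and Hamiltonian fields. $c=c_{ij}^kz_k\partial_{z_i}\wedge\partial_{z_j}$, and for a smooth complex function $f$, $c(f)=c_{ij}^kz_k\frac{\partial f}{\partial z_i}\partial_{z_j}$. Singular set and rank. $\mathrm{Sing}\,\mathfrak g^*$ is the set where $(c_{ij}^kz_k)$ has non-maximal rank, and $\operatorname{rank}\mathfrak g=n-\max_z\operatorname{rank}(c_{ij}^kz_k)$. $T^{1,0}\mathcal O=T^{\mathbb C}\mathcal O\cap T^{1,0}\mathfrak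 g^*$. *)

From mathcomp Require Import all_boot all_order all_algebra.
From mathcomp Require Import reals.
From mathcomp Require Import complex.
Set Implicit Arguments. Unset Strict Implicit. Unset Printing Implicit Defensive.
Import GRing.Theory Num.Theory ComplexField.
Local Open Scope ring_scope.
Local Open Scope complex_scope.

(* Structure constants cst i j k = c_{ij}^k of a real Lie algebra g_0 of dimension n:
   [e_i, e_j] = \sum_k c_{ij}^k e_k.  Points of g^* = C^n are row vectors 'rV[R[i]]_n. *)

Definition is_lie_structure (R : realType) (n : nat) (cst : 'I_n -> 'I_n -> 'I_n -> R) : Prop :=
  (forall i j k, cst i j k = - cst j i k) /\
  (forall i j l m, \sum_(k < n) (cst i j k * cst k l m + cst j l k * cst k i m
                                + cst l i k * cst k j m) = 0).

Definition nonabelian (R : realType) (n : nat) (cst : 'I_n -> 'I_n -> 'I_n -> R) : Prop :=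
  exists i j k, cst i j k != 0.

Definition poisson_mx (R : realType) (n : nat) (cst : 'I_n -> 'I_n -> 'I_n -> R)
  (z : 'rV[R[i]]_n) : 'M[R[i]]_n :=
  \matrix_(i, j) \sum_(k < n) (cst i j k)%:C * z 0 k.

Definition is_max_rank (R : realType) (n : nat) (cst : 'I_n -> 'I_n -> 'I_n -> R) (m : nat) : Prop :=
  (exists w, \rank (poisson_mx cst w) = m) /\ (forall w, (\rank (poisson_mx cst w) <= m)%N).

(* z is not in Sing g^* (given that m is the maximal rank). *)
Definition regular_pt (R : realType) (n : nat) (cst : 'I_n -> 'I_n -> 'I_n -> R) (m : nat)
  (z : 'rV[R[i]]_n) : Prop := \rank (poisson_mx cst z) = m.

(* c(f)(z) = c_{ij}^k z_k (df/dz_i) d/dz_j, where v_i = df/dz_i(z). *)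
Definition hamvec (R : realType) (n : nat) (cst : 'I_n -> 'I_n -> 'I_n -> R)
  (z v : 'rV[R[i]]_n) : 'rV[R[i]]_n :=
  \row_j \sum_(i < n) \sum_(k < n) (cst i j k)%:C * z 0 k * v 0 i.

Definition cnorm (R : realType) (n : nat) (h : 'rV[R[i]]_n) : R[i] :=
  \sum_(j < n) `|h 0 j|.

Definition open_set (R : realType) (n : nat) (U : 'rV[R[i]]_n -> Prop) : Prop :=
  forall z, U z -> exists d : R, 0 < d /\
    forall w, cnorm (w - z) < d%:C -> U w.

Definition cdiff (R : realType) (n : nat) (f : 'rV[R[i]]_n -> R[i]) (z d : 'rV[R[i]]_n) : Prop :=
  forall e : R, 0 < e -> exists del : R, 0 < del /\
    forall h, cnorm h < del%:C ->
      `|f (z + h) - f z - \sum_(j < n) d 0 j * h 0 j| <= e%:C * cnorm h.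

Definition holo_on (R : realType) (n : nat) (U : 'rV[R[i]]_n -> Prop)
  (f : 'rV[R[i]]_n -> R[i]) (df : 'rV[R[i]]_n -> 'rV[R[i]]_n) : Prop :=
  forall z, U z -> cdiff f z (df z).

Definition lin_indep (R : realType) (n r : nat) (v : 'I_r -> 'rV[R[i]]_n) : Prop :=
  forall a : 'I_r -> R[i], \sum_(m < r) a m *: v m = 0 -> forall m, a m = 0.

Definition cspan (R : realType) (n r : nat) (v : 'I_r -> 'rV[R[i]]_n) (w : 'rV[R[i]]_n) : Prop :=
  exists a : 'I_r -> R[i], w = \sum_(m < r) a m *: v m.

(* Infinitesimal coadjoint action of X in g_0 (real coordinates) on z in g^*:
   (ad^*_X z)(e_j) = - z([X, e_j]). *)
Definition coad (R : realType) (n : nat) (cst : 'I_n -> 'I_n -> 'I_n -> R)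
  (X : 'rV[R]_n) (z : 'rV[R[i]]_n) : 'rV[R[i]]_n :=
  \row_j - \sum_(i < n) \sum_(k < n) (X 0 i * cst i j k)%:C * z 0 k.

Definition curve_deriv (R : realType) (n : nat) (gam : R -> 'rV[R[i]]_n) (t : R)
  (v : 'rV[R[i]]_n) : Prop :=
  forall e : R, 0 < e -> exists del : R, 0 < del /\
    forall h : R, `|h| < del ->
      cnorm (gam (t + h) - gam t - h%:C *: v) <= (e * `|h|)%:C.

(* w' = exp(ad^*_X) w : time-1 flow of the linear vector field z |-> ad^*_X z. *)
Definition flow1 (R : realType) (n : nat) (cst : 'I_n -> 'I_n -> 'I_n -> R)
  (X : 'rV[R]_n) (w w' : 'rV[R[i]]_n) : Prop :=
  exists gam : R -> 'rV[R[i]]_n, gam 0 = w /\ gam 1 = w' /\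
    forall t, curve_deriv gam t (coad cst X (gam t)).

(* The G_0-orbit of z0: G_0 connected is generated by exp(g_0), and
   Ad^*(exp X) = exp(ad^*_X); so the orbit is the set of points reached from z0
   by finitely many such flows. *)
Inductive coad_orbit (R : realType) (n : nat) (cst : 'I_n -> 'I_n -> 'I_n -> R)
  (z0 : 'rV[R[i]]_n) : 'rV[R[i]]_n -> Prop :=
| orbit_refl : coad_orbit cst z0 z0
| orbit_step : forall w w' X, coad_orbit cst z0 w -> flow1 cst X w w' -> coad_orbit cst z0 w'.

(* Complexified tangent space T^C_z O inside T^C_z(C^n) = span(d/dz_j) (+) span(d/dzbar_j):
   a real tangent vector with complex coordinate displacement u is
   sum_j u_j d/dz_j + conj(u_j) d/dzbar_j, and T_z O = { ad^*_X z | X in g_0 }.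
   (v, w) are the (d/dz, d/dzbar) components. *)
Definition TC_orbit (R : realType) (n : nat) (cst : 'I_n -> 'I_n -> 'I_n -> R)
  (z v w : 'rV[R[i]]_n) : Prop :=
  exists (p : nat) (a : 'I_p -> R[i]) (X : 'I_p -> 'rV[R]_n),
    v = \sum_(k < p) a k *: coad cst (X k) z /\
    w = \sum_(k < p) a k *: map_mx conjc (coad cst (X k) z).

(* T^{1,0}_z O = T^C_z O  intersected with T^{1,0}_z(C^n): vectors with no d/dzbar part. *)
Definition T10_orbit (R : realType) (n : nat) (cst : 'I_n -> 'I_n -> 'I_n -> R)
  (z v : 'rV[R[i]]_n) : Prop := TC_orbit cst z v 0.

(* c(g~)(z) where g~(z) = sum_i conj(dg/dz_i(z)) z_i: since conj(dg/dz_i) is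
   antiholomorphic, d g~/dz_i (z) = conj(dg/dz_i(z)). *)
Definition ham_tilde (R : realType) (n : nat) (cst : 'I_n -> 'I_n -> 'I_n -> R)
  (z dgz : 'rV[R[i]]_n) : 'rV[R[i]]_n :=
  hamvec cst z (map_mx conjc dgz).

(** The Poisson matrix P(z) = (c_{ij}^k z_k) has real structure constants, so
    ad^*_X z = -X P(z) and its conjugate is -X conj(P(z)) for real X.  Complexifying
    the real coefficients X, the (1,0) part of the orbit's complexified tangent space
    is { Y P(z) : Y conj(P(z)) = 0 }.  The left kernel of conj(P(z)) has dimension
    n - rank P(z) = r, and it contains the r independent rows conj(dg_m(z)) because
    c(g_m) = 0 means dg_m(z) P(z) = 0; hence these rows span it, and
    T^{1,0}O = span { conj(dg_m(z)) P(z) } = span { c(g~_m)(z) }. *)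
From mathcomp Require Import all_boot all_order all_algebra.
From mathcomp Require Import reals.
From mathcomp Require Import complex.
Import GRing.Theory Num.Theory ComplexField.
Local Open Scope ring_scope.
Local Open Scope complex_scope.

Lemma kermx_free_rows (F : fieldType) (m n : nat) (A : 'M[F]_n) (D : 'M[F]_(m, n)) :
  row_free D -> D *m A = 0 -> m = (n - \rank A)%N -> (kermx A == D)%MS.
Proof.
move=> freeD DA rkD.
have DK : (D <= kermx A)%MS by apply/sub_kermxP.
apply/andP; split=> //.
by rewrite -(mxrank_leqif_sup DK).2 mxrank_ker -rkD (eqnP freeD).
Qed.

Lemma lin_indep_row_free (R : realType) (n r : nat) (v : 'I_r -> 'rV[R[i]]_n) :
  lin_indep v -> row_free (\matrix_m v m).
Proof.
move=> indep_v; rewrite -kermx_eq0; apply/eqP/row_matrixP => l; rewrite row0.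
have : row l (kermx (\matrix_m v m)) *m \matrix_m v m = 0.
  by rewrite -row_mul mulmx_ker row0.
move: (row l _) => u uv0; apply/rowP => m; rewrite mxE.
apply: (indep_v (fun m => u 0 m)).
by rewrite -[RHS]uv0 mulmx_sum_row; apply: eq_bigr => k _; rewrite rowK.
Qed.

Section PoissonMatrix.

Variables (R : realType) (n : nat) (cst : 'I_n -> 'I_n -> 'I_n -> R).

Local Notation P := (poisson_mx cst).
Local Notation complexify := (map_mx (real_complex R)).

Lemma hamvec_mul z v : hamvec cst z v = v *m P z.
Proof.
apply/rowP => j; rewrite !mxE; apply: eq_bigr => i _.
by rewrite !mxE mulr_sumr; apply: eq_bigr => k _; rewrite mulrC.
Qed.

Lemma coad_mul (X : 'rV[R]_n) z : coad cst X z = - (complexify X *m P z).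
Proof.
apply/rowP => j; rewrite !mxE; congr (- _); apply: eq_bigr => i _.
rewrite !mxE mulr_sumr; apply: eq_bigr => k _.
by rewrite rmorphM mulrA.
Qed.

Lemma conj_coad_mul (X : 'rV[R]_n) z :
  map_mx conjc (coad cst X z) = - (complexify X *m map_mx conjc (P z)).
Proof.
have conj_real : map_mx conjc (complexify X) = complexify X.
  by apply/rowP => j; rewrite !mxE conjc_real.
by rewrite coad_mul map_mxN map_mxM conj_real.
Qed.

Lemma T10_orbitP z v :
  T10_orbit cst z v <-> exists2 Y, v = Y *m P z & Y *m map_mx conjc (P z) = 0.
Proof.
have combE p (a : 'I_p -> R[i]) (X : 'I_p -> 'rV[R]_n) (Q : 'M_n) :
    \sum_(k < p) a k *: - (complexify (X k) *m Q)
    = (- \sum_(k < p) a k *: complexify (X k)) *m Q.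
  rewrite mulNmx mulmx_suml -sumrN; apply: eq_bigr => k _.
  by rewrite scalerN scalemxAl.
split.
- case=> p [a [X [-> w0]]].
  exists (- \sum_(k < p) a k *: complexify (X k)).
    by rewrite -combE; apply: eq_bigr => k _; rewrite coad_mul.
  by rewrite -combE [RHS]w0; apply: eq_bigr => k _; rewrite conj_coad_mul.
- case=> Y -> Y0.
  have Y_real_span :
      - \sum_(k < n) - Y 0 k *: complexify (delta_mx 0 k : 'rV[R]_n) = Y.
    rewrite -sumrN [RHS]row_sum_delta; apply: eq_bigr => k _.
    by rewrite map_delta_mx scaleNr opprK.
  exists n, (fun k => - Y 0 k), (fun k => delta_mx 0 k); split.
    rewrite -[in LHS]Y_real_span -combE.
    by apply: eq_bigr => k _; rewrite coad_mul.
  rewrite -{1}Y0 -[in LHS]Y_real_span -combE.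
  by apply: eq_bigr => k _; rewrite conj_coad_mul.
Qed.

End PoissonMatrix.

Theorem mainTheorem17 (R : realType) (n : nat) (cst : 'I_n -> 'I_n -> 'I_n -> R)
  (Hlie : is_lie_structure cst) (Hnab : nonabelian cst)
  (mr : nat) (Hmr : is_max_rank cst mr)
  (z0 : 'rV[R[i]]_n) (Hz0 : regular_pt cst mr z0)
  (U : 'rV[R[i]]_n -> Prop) (HUopen : open_set U) (HUreg : forall z, U z -> regular_pt cst mr z)
  (Hz0U : U z0)
  (g : 'I_(n - mr) -> 'rV[R[i]]_n -> R[i]) (dg : 'I_(n - mr) -> 'rV[R[i]]_n -> 'rV[R[i]]_n)
  (Hhol : forall m, holo_on U (g m) (dg m))
  (Hcas : forall m z, U z -> hamvec cst z (dg m z) = 0)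
  (Hind : forall z, U z -> lin_indep (fun m => dg m z)) :
  forall z, coad_orbit cst z0 z -> U z ->
    forall v, T10_orbit cst z v <-> cspan (fun m => ham_tilde cst z (dg m z)) v.
Proof.
(* Only the rank of P(z), c(g_m)(z) = 0 and the independence of the dg_m(z) are
   needed: the statement is pointwise linear algebra at z. *)
move=> z _ Uz v.
set P := poisson_mx cst z; set D := \matrix_m dg m z.
have DP0 : D *m P = 0.
  by apply/row_matrixP => m; rewrite row_mul rowK -hamvec_mul Hcas // row0.
have kerD : (kermx (map_mx conjc P) == map_mx conjc D)%MS.
  apply: kermx_free_rows; first by rewrite row_free_map; exact/lin_indep_row_free/Hind.
    by rewrite -map_mxM DP0 map_mx0.
  by rewrite mxrank_map HUreg.
have hamE m : ham_tilde cst z (dg m z) = row m (map_mx conjc D) *m P.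
  by rewrite /ham_tilde hamvec_mul -map_row rowK.
rewrite T10_orbitP; split.
- case=> Y -> /sub_kermxP; rewrite (eqmxP kerD) => /submxP [b ->].
  exists (fun m => b 0 m); rewrite -mulmxA mulmx_sum_row.
  by apply: eq_bigr => m _; rewrite hamE row_mul.
- case=> b ->; exists (\row_m b m *m map_mx conjc D).
    rewrite -mulmxA mulmx_sum_row; apply: eq_bigr => m _.
    by rewrite hamE row_mul mxE.
  by rewrite -mulmxA -map_mxM DP0 map_mx0 mulmx0.
Qed.
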